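(* Fix $p_{NS}=p_{min}\in(0,1)$. Let $P$ and $Q$ be semi-distributions on $\mathcal{I}=\{1,\dots,k\}$ with $P$ non-empty, and use the perfect NS-marker $\mathrm{isNS}_P$ with respect to $P$. Then $$\mathrm{LogLossNS}(Q\mid P)=H(\mathrm{DI}(P))+\mathrm{KL}_{NS}(P\,\|\,Q).$$
   Context: A semi-distribution (SD) on $\mathcal{I}$ is $W:\mathcal{I}\to[0,1]$ with $a(W):=\sum_i W(i)\le 1$; write $u(W):=1-a(W)$ and $\sup(W)=\{i:W(i)>0\}$; $W$ is non-empty if $a(W)>0$. Entropy: $H(D)=-\sum_i D(i)\ln D(i)$ (terms with $D(i)=0$ omitted). Drawing $o\sim P$ from a non-empty SD $P$: with probability $a(P)$, draw $o$ from the distribution $P/a(P)$; with probability $u(P)$, output a fresh unique ''noise'' item not in $\mathcal{I}$ (never generated before). The perfect NS-marker $\mathrm{isNS}_P(o)$ is true iff $o\notin\sup(P)$. $\mathrm{ScaleDrop}(W,\alpha,p_{min})$ is the SD $W'$ with $W'(i)=\alpha W(i)$ if $\alpha W(i)\ge p_{min}$ and $W'(i)=0$ otherwise. $\mathrm{FC}(W)$: let $W'=\mathrm{ScaleDrop}(W,1,p_{min})$; if $a(W')\le 1-p_{NS}$ return $W'$; otherwise return $\mathrm{ScaleDrop}(W',(1-p_{NS})/a(W'),p_{min})$. $\mathrm{loglossRuleNS}(o,W,m)$ for an observation $o$, map $W$ and Boolean $m$: let $W'=\mathrm{FC}(W)$ and $p=W'(o)$ (0 if $o$ is not in $\mathcal{I}$);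 if $p>0$ (equivalently $p\ge p_{min}$ and positive) return $-\ln p$; otherwise, if $m$ is false return $-\ln p_{NS}$, and if $m$ is true return $-\ln u(W')$. Then $\mathrm{LogLossNS}(Q\mid P):=\mathbb{E}_{o\sim P}[\mathrm{loglossRuleNS}(o,Q,\mathrm{isNS}_P(o))]$. Augmentation: for a non-empty SD $P$ on $\mathcal{I}$, $\mathrm{DI}(P)$ is the distribution on $\mathcal{I}\cup\{0\}$ with $\mathrm{DI}(P)(0)=u(P)$ and $\mathrm{DI}(P)(i)=P(i)$ for $i\in\mathcal{I}$. Bounded KL: $\mathrm{KL}_b(P\|Q):=\sum_{i\in\sup(P)}P(i)\ln\frac{P(i)}{\max(Q(i),p_{NS})}$, and $\mathrm{KL}_{NS}(P\|Q):=\mathrm{KL}_b(\mathrm{DI}(P)\,\|\,\mathrm{DI}(\mathrm{FC}(Q)))$. *)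

From HB Require Import structures.
From mathcomp Require Import all_boot all_order all_algebra.
From mathcomp Require Import reals exp.
Set Implicit Arguments. Unset Strict Implicit. Unset Printing Implicit Defensive.
Import Order.TTheory GRing.Theory Num.Theory.
Local Open Scope ring_scope.

Section SD.
Variable R : realType.

Definition is_SD (T : finType) (W : T -> R) : Prop :=
  (forall i, 0 <= W i <= 1) /\ \sum_(i : T) W i <= 1.

Definition amass (T : finType) (W : T -> R) : R := \sum_(i : T) W i.
Definition umass (T : finType) (W : T -> R) : R := 1 - amass W.

Definition entropy (T : finType) (D : T -> R) : R :=
  - \sum_(i : T | 0 < D i) D i * ln (D i).

Variables (pNS pmin : R).

Definition ScaleDrop (T : finType) (W : T -> R) (alpha : R) : T -> R :=
  fun i => if pmin <= alpha * W i then alpha * W i else 0.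

Definition FC (T : finType) (W : T -> R) : T -> R :=
  let W' := ScaleDrop W 1 in
  if amass W' <= 1 - pNS then W'
  else ScaleDrop W' ((1 - pNS) / amass W').

(* Observations: Some i for an item i of I, None for a (fresh) noise item
   outside I.  All noise items behave identically for the loss. *)
Definition obs_prob (T : finType) (P : T -> R) (o : option T) : R :=
  match o with
  | Some i => amass P * (P i / amass P)
  | None => umass P
  end.

Definition isNS (T : finType) (P : T -> R) (o : option T) : bool :=
  match o with
  | Some i => ~~ (0 < P i)
  | None => true
  end.

Definition loglossRuleNS (T : finType) (o : option T) (W : T -> R) (m : bool) : R :=
  let W' := FC W in
  let p := match o with Some i => W' i | None => 0 end in
  if 0 < p then - ln p
  else if ~~ m then - ln pNS
  else - ln (umass W').

Definition LogLossNS (T : finType) (Q P : T -> R) : R :=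
  \sum_(o : option T) obs_prob P o * loglossRuleNS o Q (isNS P o).

(* Augmentation DI(P): None plays the role of the extra element 0. *)
Definition DI (T : finType) (P : T -> R) : option T -> R :=
  fun o => match o with Some i => P i | None => umass P end.

Definition KL_b (T : finType) (P Q : T -> R) : R :=
  \sum_(i : T | 0 < P i) P i * ln (P i / Num.max (Q i) pNS).

Definition KL_NS (T : finType) (P Q : T -> R) : R :=
  KL_b (DI P) (DI (FC Q)).

End SD.

From HB Require Import structures.
From mathcomp Require Import all_boot all_order all_algebra.
From mathcomp Require Import reals exp lra.
Set Implicit Arguments. Unset Strict Implicit. Unset Printing Implicit Defensive.
Import Order.TTheory GRing.Theory Num.Theory.
Local Open Scope ring_scope.

(* Drawing from P is drawing from the augmented distribution DI(P), and with the
   perfect marker every observation in the support of DI(P) is scored by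
   -ln max(DI(FC Q) o, p_NS): a kept item has FC-mass at least p_min >= p_NS,
   a dropped item is charged p_NS, and a noise item is charged the unassigned
   mass of FC Q, which is at least p_NS.  The loss is thus a cross entropy,
   which splits as entropy plus the (bounded) KL divergence. *)

Section ScaleDropTheory.
Variables (R : realType) (pmin : R) (T : finType) (W : T -> R).
Hypothesis W_ge0 : forall i, 0 <= W i.

Lemma ScaleDrop_ge0 a i : 0 <= a -> 0 <= ScaleDrop pmin W a i.
Proof. by move=> a_ge0; rewrite /ScaleDrop; case: ifP => // _; rewrite mulr_ge0. Qed.

Lemma ScaleDrop_le a i : 0 <= a -> ScaleDrop pmin W a i <= a * W i.
Proof. by move=> a_ge0; rewrite /ScaleDrop; case: ifP => // _; rewrite mulr_ge0. Qed.

End ScaleDropTheory.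

Lemma ScaleDrop_eq0_or_ge (R : realType) (pmin : R) (T : finType) (W : T -> R) a i :
  ScaleDrop pmin W a i = 0 \/ pmin <= ScaleDrop pmin W a i.
Proof. by rewrite /ScaleDrop; case: ifP; [right | left]. Qed.

Lemma FC_eq0_or_ge (R : realType) (pNS pmin : R) (T : finType) (Q : T -> R) i :
  FC pNS pmin Q i = 0 \/ pmin <= FC pNS pmin Q i.
Proof. by rewrite /FC; case: ifP => _; apply: ScaleDrop_eq0_or_ge. Qed.

Section FCMass.
Variables (R : realType) (pNS pmin : R) (T : finType) (Q : T -> R).
Hypotheses (pNS_le1 : pNS <= 1) (Q_ge0 : forall i, 0 <= Q i).

Let W := ScaleDrop pmin Q 1.
Let W_ge0 i : 0 <= W i. Proof. exact: ScaleDrop_ge0. Qed.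

Let amass_gt0 : ~~ (amass W <= 1 - pNS) -> 0 < amass W.
Proof. by move=> W_big; rewrite (le_lt_trans (_ : 0 <= 1 - pNS)) ?subr_ge0 // ltNge. Qed.

Let rescale_ge0 : ~~ (amass W <= 1 - pNS) -> 0 <= (1 - pNS) / amass W.
Proof. by move=> /amass_gt0/ltW amass_ge0; rewrite divr_ge0 ?subr_ge0. Qed.

Lemma amass_FC_le : amass (FC pNS pmin Q) <= 1 - pNS.
Proof.
rewrite /FC -/W; case: ifPn => // W_big.
rewrite /amass (le_trans (ler_sum _ (fun i _ => ScaleDrop_le pmin W_ge0 i (rescale_ge0 W_big)))) //.
by rewrite -mulr_sumr -/(amass W) divfK ?gt_eqF ?amass_gt0.
Qed.

Lemma umass_FC_ge : pNS <= umass (FC pNS pmin Q).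
Proof. by rewrite /umass lerBrDl -lerBrDr amass_FC_le. Qed.

End FCMass.

Lemma is_SD_ge0 (R : realType) (T : finType) (W : T -> R) :
  is_SD W -> forall i, 0 <= W i.
Proof. by case=> W01 _ i; case/andP: (W01 i). Qed.

Lemma DI_ge0 (R : realType) (T : finType) (P : T -> R) :
  is_SD P -> forall o, 0 <= DI P o.
Proof.
move=> SD_P [i | ] /=; first exact: is_SD_ge0.
by case: SD_P => _; rewrite /umass subr_ge0.
Qed.

Lemma obs_prob_DI (R : realType) (T : finType) (P : T -> R) o :
  amass P != 0 -> obs_prob P o = DI P o.
Proof. by case: o => [i | ] //= aP; rewrite mulrC divfK. Qed.

Section PerfectMarkerLoss.
Variables (R : realType) (pNS pmin : R) (T : finType) (P Q : T -> R).
Hypotheses (pNS_gt0 : 0 < pNS) (pNS_le_pmin : pNS <= pmin) (pNS_le1 : pNS <= 1).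
Hypothesis Q_ge0 : forall i, 0 <= Q i.

Lemma loglossRuleNS_isNS o : 0 < DI P o ->
  loglossRuleNS pNS pmin o Q (isNS P o) = - ln (Num.max (DI (FC pNS pmin Q) o) pNS).
Proof.
rewrite /loglossRuleNS; case: o => [i | ] /= => [P_gt0 | _]; last first.
  by rewrite ltxx max_l ?umass_FC_ge.
rewrite P_gt0 /=; case: (@FC_eq0_or_ge _ pNS pmin _ Q i) => [-> | FC_ge].
  by rewrite ltxx max_r ?ltW.
have FC_ge_pNS := le_trans pNS_le_pmin FC_ge.
by rewrite (lt_le_trans pNS_gt0 FC_ge_pNS) max_l.
Qed.

End PerfectMarkerLoss.

Lemma sum_mul_support (R : numDomainType) (T : finType) (D F : T -> R) :
  (forall i, 0 <= D i) -> \sum_i D i * F i = \sum_(i | 0 < D i) D i * F i.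
Proof.
move=> D_ge0; rewrite [RHS]big_mkcond; apply: eq_bigr => i _.
case: ifPn => // D_ngt0; move: (D_ge0 i).
by rewrite le0r (negbTE D_ngt0) orbF => /eqP ->; rewrite mul0r.
Qed.

Lemma cross_entropy_split (R : realType) (pNS : R) (T : finType) (D M : T -> R) :
  0 < pNS ->
  \sum_(i | 0 < D i) D i * - ln (Num.max (M i) pNS) = entropy D + KL_b pNS D M.
Proof.
move=> pNS_gt0; rewrite /entropy /KL_b -sumrN -big_split /=.
apply: eq_bigr => i D_gt0; have M_gt0 : 0 < Num.max (M i) pNS by rewrite lt_max pNS_gt0 orbT.
by rewrite ln_div ?posrE //; lra.
Qed.

Theorem lemma5 (R : realType) (pNS pmin : R) (k : nat) (P Q : 'I_k -> R) :
  pNS = pmin -> 0 < pNS < 1 ->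
  is_SD P -> is_SD Q -> 0 < amass P ->
  LogLossNS pNS pmin Q P = entropy (DI P) + KL_NS pNS pmin P Q.
Proof.
move=> <- /andP[pNS_gt0 pNS_lt1] SD_P SD_Q aP.
rewrite /KL_NS -cross_entropy_split // /LogLossNS.
under eq_bigr do rewrite obs_prob_DI ?gt_eqF //.
rewrite sum_mul_support; last exact: DI_ge0.
apply: eq_bigr => o DI_gt0.
by rewrite loglossRuleNS_isNS //; [exact: ltW | exact: is_SD_ge0].
Qed.
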